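(* Let $r\in\mathbb{N}$ with $r\ge2$, let $u,v,w\in\mathbb{YF}^r$, and let $i,j\in\{1,\dots,r\}$ with $i\ne j$. Then $$d_r(w1_iu,\,v1_ju)\le d_r(w1_iu,\,v2u),$$ where juxtaposition denotes concatenation of words.
   Context: Fix $r\in\mathbb{N}$. Words. Vertices of $\mathbb{YF}^r$ are finite words over $\{1_1,\dots,1_r,2\}$. A letter $1_i$ is a one with digit value $1$; $2$ is a two with digit value $2$. $|x|$ is the digit sum. The graph $\mathbb{YF}^r$. It is graded by $|\cdot|$. From $x$ there is a downward edge to every word obtained by one of two operations: (i) delete the leftmost one; (ii) replace a $2$ lying left of the leftmost one (any $2$ if there are no ones) by $1_i$, with arbitrary $i$. Path counts. $d_r(x,y)$ is the number of downward paths $y=y_n\to\dots\to y_m=x$ in $\mathbb{YF}^r$ with $|y_i|=i$ ($0$ if none). *)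

From mathcomp Require Import all_boot.
Set Implicit Arguments. Unset Strict Implicit. Unset Printing Implicit Defensive.

(* Letters of YF^r: [Some k] (k : 'I_r) is the one 1_{k+1}; [None] is the two 2.
   (Indices are 0-based: 'I_r = {0,...,r-1} stands for {1,...,r}.) *)
Definition letter (r : nat) := option 'I_r.
Definition word (r : nat) := seq (letter r).

Definition digit r (a : letter r) : nat := if a is Some _ then 1 else 2.
Definition weight r (x : word r) : nat := sumn (map (@digit r) x).

Definition is_one r (a : letter r) : bool := if a is Some _ then true else false.

(* Down-neighbours of x in YF^r:
   (i) delete the leftmost one;
   (ii) replace a 2 lying left of the leftmost one (any 2 if there is no one)
        by 1_k, k arbitrary. *)
Definition down r (x : word r) : seq (word r) :=
  let p := find (@is_one r) x in
  undup
   ((if p < size x then [:: take p x ++ drop p.+1 x] else [::]) ++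
    [seq set_nth None x q (Some k)
       | q <- [seq q <- iota 0 p | nth None x q == None]
       , k <- enum 'I_r]).

Fixpoint npaths r (n : nat) (y x : word r) : nat :=
  if n is n'.+1 then sumn [seq npaths n' z x | z <- down y]
  else (y == x : nat).

(* d_r(x, y): number of downward paths y = y_n -> ... -> y_m = x with |y_i| = i
   (each edge lowers the weight by exactly 1). *)
Definition d r (x y : word r) : nat :=
  if weight x <= weight y then npaths (weight y - weight x) y x else 0.

From mathcomp Require Import all_boot.
Set Implicit Arguments. Unset Strict Implicit. Unset Printing Implicit Defensive.

(* If v contains a one, the leftmost one of v 1_j u and of v 2 u lies in v and
   the replaceable twos lie left of it, so every down-step of either word
   changes only v: both words have the same down-steps V 1_j u and V 2 u.
   Following these steps, by induction we reach a V without ones, and then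
   V 1_j u is itself a down-neighbour of V 2 u, so its paths are among those
   of V 2 u after one more step.  While v has a one the suffix 1_j u is kept,
   so such paths never end at w 1_i u when i != j. *)

Lemma set_nth_catl T (x0 : T) (s1 s2 : seq T) n y : n < size s1 ->
  set_nth x0 (s1 ++ s2) n y = set_nth x0 s1 n y ++ s2.
Proof. by elim: s1 n => [|a s1 IH] [|n] //= lt_n_s1; rewrite IH. Qed.

Lemma set_nth_catr T (x0 : T) (s1 s2 : seq T) y :
  set_nth x0 (s1 ++ s2) (size s1) y = s1 ++ set_nth x0 s2 0 y.
Proof. by elim: s1 => [|a s1 IH] //=; rewrite IH. Qed.

Lemma drop_catl T (s1 s2 : seq T) n : n <= size s1 ->
  drop n (s1 ++ s2) = drop n s1 ++ s2.
Proof. by elim: s1 n => [|a s1 IH] [|n] //= le_n_s1; rewrite ?drop0 ?IH. Qed.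

Lemma cats_inj (T : Type) (s : seq T) : injective (cat^~ s).
Proof.
apply: (can_inj (g := fun t => take (size t - size s) t)) => t.
by rewrite size_cat addnK take_size_cat.
Qed.

Lemma sumn_map_le T (F G : T -> nat) (s : seq T) : (forall x, F x <= G x) ->
  sumn (map F s) <= sumn (map G s).
Proof. by move=> leFG; rewrite !sumnE !big_map leq_sum. Qed.

Lemma sumn_map_mem (T : eqType) (F : T -> nat) (s : seq T) z : z \in s ->
  F z <= sumn (map F s).
Proof. by move=> s_z; rewrite sumnE big_map (big_rem z) //= leq_addr. Qed.

Lemma suffix_cons_cat (T : eqType) (w u : seq T) a b :
  suffix (a :: u) (w ++ b :: u) = (a == b).
Proof.
rewrite -cat1s -cat_rcons suffix_catl // eqxx /=.
by rewrite -cats1 -[[:: a]]cat0s suffix_catl // suffix0s andbT eqseq_cons andbT.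
Qed.

Section Down.

Variable r : nat.
Implicit Types (u v s x : word r) (j : 'I_r).

Lemma weight_cat s1 s2 : weight (s1 ++ s2) = weight s1 + weight s2.
Proof. by rewrite /weight map_cat sumn_cat. Qed.

Lemma down_cat v s : has (@is_one r) v ->
  down (v ++ s) = map (cat^~ s) (down v).
Proof.
move=> v_one; have lt_p_v : find (@is_one r) v < size v by rewrite -has_find.
rewrite /down find_cat v_one size_cat (leq_trans lt_p_v (leq_addr _ _)) lt_p_v.
rewrite -[RHS](undup_map_inj (@cats_inj _ s)) map_cat map_allpairs.
congr (undup (_ ++ _)).
  by rewrite (takel_cat _ (ltnW lt_p_v)) (drop_catl _ lt_p_v) catA.
set p := find _ v.
have -> : [seq q <- iota 0 p | nth None (v ++ s) q == None]
        = [seq q <- iota 0 p | nth None v q == None].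
  apply: eq_in_filter => q; rewrite mem_iota => /andP [_ lt_q_p].
  by rewrite nth_cat (ltn_trans lt_q_p lt_p_v).
apply/eq_in_allpairs => q k; rewrite mem_filter mem_iota => /andP [_ /andP [_ lt_q_p]] _.
by rewrite set_nth_catl // (ltn_trans lt_q_p lt_p_v).
Qed.

Lemma mem_down_two v u j : ~~ has (@is_one r) v ->
  v ++ Some j :: u \in down (v ++ None :: u).
Proof.
move=> v_no_one; rewrite /down find_cat (negbTE v_no_one) mem_undup mem_cat.
apply/orP; right.
have -> : v ++ Some j :: u = set_nth None (v ++ None :: u) (size v) (Some j).
  by rewrite set_nth_catr.
apply: allpairs_f; last by rewrite mem_enum.
rewrite mem_filter nth_cat ltnn subnn eqxx mem_iota /=.
by rewrite addnS ltnS leq_addr.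
Qed.

Lemma npaths_one_le_two n v u j x : ~~ suffix (Some j :: u) x ->
  npaths n (v ++ Some j :: u) x <= npaths n.+1 (v ++ None :: u) x.
Proof.
move=> x_not_suffix.
elim: n v => [|n IH] v; have [v_one|v_no_one] := boolP (has (@is_one r) v);
  try by apply: sumn_map_mem; apply: mem_down_two.
- by rewrite /=; case: eqP x_not_suffix => // <-; rewrite suffix_suffix.
- rewrite [npaths n.+1 _ _]/= [npaths n.+2 _ _]/= !down_cat // -!map_comp.
  by apply: sumn_map_le => V /=; apply: IH.
Qed.

End Down.

Theorem mainTheorem10 (r : nat) (hr : 2 <= r) (u v w : word r) (i j : 'I_r)
  (hij : i != j) :
  d (w ++ Some i :: u) (v ++ Some j :: u) <= d (w ++ Some i :: u) (v ++ None :: u).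
Proof.
have weight_two : weight (v ++ None :: u) = (weight (v ++ Some j :: u)).+1.
  by rewrite !weight_cat /= addnS.
have not_suffix : ~~ suffix (Some j :: u) (w ++ Some i :: u).
  by rewrite suffix_cons_cat eq_sym (inj_eq (@Some_inj _)).
rewrite /d weight_two; case: ifP => // le_weight.
by rewrite (leq_trans le_weight (leqnSn _)) subSn // npaths_one_le_two.
Qed.
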